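(* Let $G=(V,E)$ be a computation graph with $n=|V|$ vertices and fast-memory size $M$. Let $J^*_G$ be the minimum number of non-trivial I/Os over all valid evaluations of $G$. Let $\lambda_1(\tilde L)\le\lambda_2(\tilde L)\le\dots\le\lambda_n(\tilde L)$ be the eigenvalues of $\tilde L$ in increasing order. Then for every integer $k$ with $1\le k\le n$, $$J^*_G \;\geq\; \left\lfloor \frac{n}{k}\right\rfloor \sum_{i=1}^k \lambda_i(\tilde L) \;-\; 2kM.$$
   Context: A computation graph is a finite directed acyclic graph $G=(V,E)$. Each vertex is an operation producing a single element, and an edge $(u,v)$ means the result of $u$ is an operand of $v$. Sources are the inputs and sinks are the outputs. Execution model: a single processor has a fast memory holding at most $M$ elements and an unbounded slow memory. Every vertex is evaluated exactly once (no recomputation), in an order that is topological with respect to $G$. To evaluate $v$, all parents of $v$ must be in fast memory; a parent not present must be read from slow memory. The eviction policy is unconstrained, but a value that is evicted while still needed by a later vertex must first be written to slow memory. Only non-trivial I/O is counted. Inputs can be placed directly into fast memory at no cost, and outputs are reported immediately at no cost when computed. However, an input that is evicted while still needed must be written to slow memory. Each transfer of one element between fast and slow memory counts as one I/O. $\tilde L=\tilde D-\tilde A$ is the Laplacian of the weighted undirected graph $\tilde G$ on $V$. For each directed edge $(u,v)\in E$, $\tilde G$ contains the undirected edge $\{u,v\}$ with weight $1/d_{out}(u)$, where $d_{out}$ is out-degree in $G$. $\tilde A$ is its weighted adjacency matrix and $\tilde D$ its diagonal weighted-degree matrix. *)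

From HB Require Import structures.
From mathcomp Require Import all_boot all_order all_algebra.
From mathcomp Require Import reals.
Set Implicit Arguments. Unset Strict Implicit. Unset Printing Implicit Defensive.
Import Order.TTheory GRing.Theory Num.Theory.
Local Open Scope ring_scope.

(* A computation graph on the vertex set 'I_n: e u v means (u,v) \in E,
   i.e. the result of u is an operand of v. *)
Definition acyclic_graph (n : nat) (e : rel 'I_n) : Prop :=
  forall u v, e u v -> ~~ connect e v u.

Inductive op (n : nat) :=
| Compute of 'I_n   (* evaluate vertex v (for a source: place the input, free) *)
| Read of 'I_n
| Write of 'I_n
| Evict of 'I_n.

Record state (n : nat) := State {
  fast : {set 'I_n};
  slow : {set 'I_n};
  computed : {set 'I_n} }.

Definition parents (n : nat) (e : rel 'I_n) (v : 'I_n) : {set 'I_n} :=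
  [set u | e u v].

Definition still_needed (n : nat) (e : rel 'I_n) (C : {set 'I_n}) (v : 'I_n) : bool :=
  [exists w, e v w && (w \notin C)].

Definition step (n : nat) (e : rel 'I_n) (M : nat) (st : state n) (o : op n)
  : option (state n) :=
  let: State F Sl C := st in
  match o with
  | Compute v =>
      if [&& v \notin C, parents e v \subset F & (#|v |: F| <= M)%N]
      then Some (State (v |: F) Sl (v |: C)) else None
  | Read v =>
      if [&& v \in Sl, v \notin F & (#|v |: F| <= M)%N]
      then Some (State (v |: F) Sl C) else None
  | Write v =>
      if v \in F then Some (State F (v |: Sl) C) else None
  | Evict v =>
      if (v \in F) && ((v \in Sl) || ~~ still_needed e C v)
      then Some (State (F :\ v) Sl C) else None
  end.

Definition run (n : nat) (e : rel 'I_n) (M : nat) (s : seq (op n)) : option (state n) :=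
  foldl (fun ost o => obind (fun st => step e M st o) ost)
        (Some (State set0 set0 set0)) s.

(* A valid evaluation: every step is legal and every vertex gets evaluated
   (exactly once, since Compute requires v not yet computed). *)
Definition valid_evaluation (n : nat) (e : rel 'I_n) (M : nat) (s : seq (op n)) : bool :=
  if run e M s is Some st then computed st == setT else false.

Definition io_cost (n : nat) (s : seq (op n)) : nat :=
  count (fun o => match o with Read _ | Write _ => true | _ => false end) s.

Definition dout (n : nat) (e : rel 'I_n) (u : 'I_n) : nat := #|[set v | e u v]|.

Definition wadj (R : realType) (n : nat) (e : rel 'I_n) (u v : 'I_n) : R :=
  (if e u v then ((dout e u)%:R)^-1 else 0) + (if e v u then ((dout e v)%:R)^-1 else 0).

Definition laplacian (R : realType) (n : nat) (e : rel 'I_n) : 'M[R]_n :=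
  \matrix_(u, v) ((u == v)%:R * (\sum_w wadj R e u w) - wadj R e u v).

Definition sorted_eigenvalues (R : realType) (n : nat) (A : 'M[R]_n) (s : seq R) : Prop :=
  [/\ size s = n, sorted (<=%R) s & char_poly A = \prod_(x <- s) ('X - x%:P)].

(* Split the evaluation order into k consecutive segments, each computing exactly
   q = n %/ k new vertices, and let B_j be the block of vertices computed in segment j.
   A vertex of B_j with an out-edge leaving B_j is still needed when the segment ends,
   so it is then in fast memory or was written during the segment; a vertex outside
   B_j with an edge into B_j was computed before the segment, so it is in fast memory
   when the segment starts or is read during it.  Hence both boundaries of B_j together
   have at most 2M + (I/Os of segment j) vertices, and since every vertex spreads total
   weight at most 1 over its out-edges, this also bounds the weighted cut of B_j in G~.
   On the spectral side, the normalized indicator vectors of the disjoint blocks are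
   orthonormal, so by Ky Fan's minimum principle the sum of the k smallest eigenvalues
   of L~ is at most sum_j cut(B_j) / |B_j| = sum_j cut(B_j) / q. *)

From HB Require Import structures.
From mathcomp Require Import all_boot all_order all_algebra.
From mathcomp Require Import reals complex.
From mathcomp Require Import ring lra zify.
Import Order.TTheory GRing.Theory Num.Theory.

Set Implicit Arguments.
Unset Strict Implicit.
Unset Printing Implicit Defensive.

Definition out_boundary n (e : rel 'I_n) (A : {set 'I_n}) : {set 'I_n} :=
  [set u in A | [exists v in ~: A, e u v]].

Definition in_boundary n (e : rel 'I_n) (A : {set 'I_n}) : {set 'I_n} :=
  [set v in ~: A | [exists u in A, e v u]].

Section Execution.

Variables (n : nat) (e : rel 'I_n) (M : nat).

Fixpoint exec (st : state n) (l : seq (op n)) : option (state n) :=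
  if l is o :: l' then obind (exec^~ l') (step e M st o) else Some st.

Lemma run_exec s : run e M s = exec (State set0 set0 set0) s.
Proof.
rewrite /run; elim: s (State _ _ _) => //= o s IHs st.
by case: (step e M st o) => [st'|] /=; [exact: IHs | elim: s {IHs}].
Qed.

Lemma exec_cat st l1 l2 : exec st (l1 ++ l2) = obind (exec^~ l2) (exec st l1).
Proof. by elim: l1 st => //= o l1 IHl st; case: step. Qed.

Definition compute_of (o : op n) := if o is Compute v then Some v else None.
Definition read_of (o : op n) := if o is Read v then Some v else None.
Definition write_of (o : op n) := if o is Write v then Some v else None.

Lemma io_cost_pmap l : io_cost l = size (pmap read_of l) + size (pmap write_of l).
Proof. by rewrite !size_pmap; elim: l => //= -[] v l ->; rewrite ?addnS. Qed.

Lemma step_computed st o st' : step e M st o = Some st' ->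
  computed st' = if compute_of o is Some v then v |: computed st else computed st.
Proof. by case: st => F S C; case: o => v /=; case: ifP => // _ [<-]. Qed.

Lemma step_slow st o st' : step e M st o = Some st' ->
  slow st' = if write_of o is Some v then v |: slow st else slow st.
Proof. by case: st => F S C; case: o => v /=; case: ifP => // _ [<-]. Qed.

Lemma step_fast st o st' u : step e M st o = Some st' -> u \in computed st ->
  u \in fast st' -> (u \in fast st) || (read_of o == Some u).
Proof.
case: st => F S C; case: o => v /=; case: ifP => //.
- by case/and3P=> vC _ _ [<-] uC /setU1P[uv|->//]; rewrite -uv uC in vC.
- by move=> _ [<-] _ /setU1P[->|->]; rewrite ?eqxx ?orbT.
- by move=> _ [<-] _ ->.
- by move=> _ [<-] _; rewrite inE => /andP[_ ->].
Qed.

Lemma step_compute st v st' : step e M st (Compute v) = Some st' ->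
  parents e v \subset fast st.
Proof. by case: st => F S C /=; case: ifP => // /and3P[]. Qed.

Lemma still_needed_sub (C C' : {set 'I_n}) u :
  C \subset C' -> still_needed e C' u -> still_needed e C u.
Proof.
move=> sCC' /existsP[w /andP[euw wC']]; apply/existsP; exists w.
by rewrite euw; apply: contra wC'; apply: subsetP.
Qed.

Definition wf_state (st : state n) :=
  [/\ #|fast st| <= M, fast st \subset computed st, slow st \subset computed st,
      {in computed st, forall u, still_needed e (computed st) u ->
         u \in fast st :|: slow st} &
      forall u v, e u v -> v \in computed st -> u \in computed st].

Lemma step_wf st o st' : step e M st o = Some st' -> wf_state st -> wf_state st'.
Proof.
case: st => F S C; case: o => v /=; case: ifP => //.
- case/and3P=> _ pF card [<-] [/= _ FC SC live closed]; split=> //=.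
  + exact: setUS.
  + by rewrite (subset_trans SC) ?subsetUr.
  + move=> u /setU1P[-> _|uC]; first by rewrite !inE eqxx.
    move/(still_needed_sub (subsetUr _ _))/(live u uC).
    by rewrite !inE => /orP[]->; rewrite ?orbT.
  + move=> u w euw /setU1P[wv|/(closed u w euw) uC]; rewrite inE; last first.
      by rewrite uC orbT.
    by rewrite (subsetP FC) ?orbT // (subsetP pF) // inE -wv.
- case/and3P=> vS _ card [<-] [/= _ FC SC live closed]; split=> //=.
  + by rewrite subUset sub1set (subsetP SC).
  + by move=> u uC /(live u uC); rewrite !inE => /orP[]->; rewrite ?orbT.
- move=> vF [<-] [/= card FC SC live closed]; split=> //=.
  + by rewrite subUset sub1set (subsetP FC).
  + by move=> u uC /(live u uC); rewrite !inE => /orP[]->; rewrite ?orbT.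
- case/andP=> vF evictable [<-] [/= card FC SC live closed]; split=> //=.
  + by rewrite (leq_trans _ card) ?subset_leq_card ?subD1set.
  + by rewrite (subset_trans _ FC) ?subD1set.
  + move=> u uC need; have := live u uC need; rewrite !inE.
    have [uv|//] := eqVneq u v; rewrite uv in need *.
    by case/orP: evictable => [->|/negP]; rewrite ?orbT.
Qed.

Lemma exec_wf st l st' : exec st l = Some st' -> wf_state st -> wf_state st'.
Proof.
elim: l st => [|o l IHl] st /=; first by case=> ->.
by case E: step => [st1|] //= /IHl wf1 /(step_wf E).
Qed.

Lemma exec_recorded (f : state n -> {set 'I_n}) (g : op n -> option 'I_n) st l st' :
  (forall st o st', step e M st o = Some st' ->
     f st' = if g o is Some v then v |: f st else f st) ->
  exec st l = Some st' -> f st' = f st :|: [set:: pmap g l].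
Proof.
move=> fstep; elim: l st => [|o l IHl] st /=; first by case=> <-; rewrite set_nil setU0.
case E: step => [st1|] //= /IHl ->; rewrite (fstep _ _ _ E) /=.
by case: (g o) => [v|] //=; rewrite set_cons setUCA setUA.
Qed.

Lemma exec_computed st l st' : exec st l = Some st' ->
  computed st' = computed st :|: [set:: pmap compute_of l].
Proof. exact: exec_recorded step_computed. Qed.

Lemma exec_slow st l st' : exec st l = Some st' ->
  slow st' = slow st :|: [set:: pmap write_of l].
Proof. exact: exec_recorded step_slow. Qed.

Lemma exec_read_parent st l st' u v : exec st l = Some st' ->
  u \notin computed st -> u \in computed st' -> e v u -> v \in computed st ->
  (v \in fast st) || (v \in pmap read_of l).
Proof.
elim: l st => [|o l IHl] st /=; first by case=> <- /negP.
case E: step => [st1|] //= run1 uC uC' evu vC.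
have C1 := step_computed E.
have [uC1|uNC1] := boolP (u \in computed st1).
  have ou : o = Compute u.
    move: uC1; rewrite C1; case: o E {C1} => w //= _; rewrite ?(negPf uC) //.
    by rewrite !inE (negPf uC) orbF => /eqP->.
  by rewrite ou in E; rewrite (subsetP (step_compute E)) // inE.
have vC1 : v \in computed st1.
  by rewrite C1; case: (compute_of o) => //= w; rewrite inE vC orbT.
case/orP: (IHl st1 run1 uNC1 uC' evu vC1) => [/(step_fast E vC)|vl].
  by case/orP=> [->//|/eqP->] /=; rewrite in_cons eqxx orbT.
by case: (read_of o) => [w|] /=; rewrite ?in_cons vl !orbT.
Qed.

Lemma exec_out_boundary st l st' : wf_state st -> exec st l = Some st' ->
  out_boundary e (computed st' :\: computed st) \subset
    fast st' :|: [set:: pmap write_of l].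
Proof.
move=> wf run; have [_ _ SC _ closed] := wf; have [_ _ _ live' _] := exec_wf run wf.
apply/subsetP => u; rewrite !inE => /andP[/andP[uNC uC'] /exists_inP[v vNB euv]].
have vNC' : v \notin computed st'.
  apply: contra uNC => vC'; apply: closed euv _.
  by move: vNB; rewrite !inE vC' andbT negbK.
have need : still_needed e (computed st') u by apply/existsP; exists v; rewrite euv.
move: (live' u uC' need); rewrite (exec_slow run) !inE.
by case/or3P=> [->//|uS|->]; [rewrite (subsetP SC u uS) in uNC | rewrite orbT].
Qed.

Lemma exec_in_boundary st l st' : wf_state st -> exec st l = Some st' ->
  in_boundary e (computed st' :\: computed st) \subset
    fast st :|: [set:: pmap read_of l].
Proof.
move=> wf run; have [_ _ _ _ closed'] := exec_wf run wf.
apply/subsetP => v; rewrite inE => /andP[vNB /exists_inP[u /setDP[uC' uNC] evu]].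
have vC : v \in computed st.
  by move: vNB; rewrite !inE (closed' _ _ evu uC') andbT negbK.
by rewrite !inE; apply: exec_read_parent run uNC uC' evu vC.
Qed.

Lemma exec_boundary_le st l st' : wf_state st -> exec st l = Some st' ->
  #|out_boundary e (computed st' :\: computed st)| +
  #|in_boundary e (computed st' :\: computed st)| <= 2 * M + io_cost l.
Proof.
move=> wf run; have [F_le _ _ _ _] := wf; have [F'_le _ _ _ _] := exec_wf run wf.
have card_le (A : {set 'I_n}) (r : seq 'I_n) : #|A :|: [set:: r]| <= #|A| + size r.
  by rewrite (leq_trans (leq_card_setU _ _).1) // leq_add2l cardsE card_size.
have out_le := leq_trans (subset_leq_card (exec_out_boundary wf run)) (card_le _ _).
have in_le := leq_trans (subset_leq_card (exec_in_boundary wf run)) (card_le _ _).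
rewrite io_cost_pmap; lia.
Qed.

End Execution.

Definition first_reach (g : nat -> nat) N m := find (fun i => m <= g i) (iota 0 N.+1).

Lemma first_reach_mono g N : {homo first_reach g N : m m' / m <= m'}.
Proof. by move=> m m' mm'; apply: sub_find => i; apply: leq_trans. Qed.

Lemma first_reachE g N m : g 0 = 0 -> (forall i, g i.+1 <= (g i).+1) -> m <= g N ->
  g (first_reach g N m) = m.
Proof.
move=> g0 gS mN; rewrite /first_reach; set P := fun i => m <= g i.
have has_reach : has P (iota 0 N.+1).
  by apply/hasP; exists N; [rewrite mem_iota add0n ltnSn | exact: mN].
have lt_find : find P (iota 0 N.+1) < N.+1 by move: has_reach; rewrite has_find size_iota.
have := nth_find 0 has_reach; rewrite nth_iota // add0n /P => m_le.
apply/eqP; rewrite eqn_leq m_le andbT.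
case E: find lt_find m_le => [|i] lt_find m_le; first by rewrite g0 in m_le *.
have := @before_find _ 0 P (iota 0 N.+1) i.
rewrite E ltnSn nth_iota ?add0n ?(ltnW lt_find) //.
by move/(_ isT)/negbT; rewrite -ltnNge => /(leq_trans (gS i)).
Qed.

Lemma disjoint_chain_diff (T : finType) (A : nat -> {set T}) :
  {homo A : i j / i <= j >-> i \subset j} ->
  forall i j, i != j -> [disjoint A i.+1 :\: A i & A j.+1 :\: A j].
Proof.
move=> A_mono; suff lt_disj i j : i < j -> [disjoint A i.+1 :\: A i & A j.+1 :\: A j].
  by move=> i j; case: ltngtP => // ij _; [|rewrite disjoint_sym]; apply: lt_disj.
move=> ij; apply: (disjointWl (subset_trans (subsetDl _ _) (A_mono _ _ ij))).
by rewrite disjoint_sym disjoints_subset setDE subsetIr.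
Qed.

Lemma io_cost_segments n (s : seq (op n)) (T : nat -> nat) k :
  T 0 = 0 -> {homo T : i j / i <= j} ->
  \sum_(j < k) io_cost (drop (T j) (take (T j.+1) s)) = io_cost (take (T k) s).
Proof.
move=> T0 T_mono; elim: k => [|k IHk]; first by rewrite big_ord0 T0 take0.
rewrite big_ord_recr /= IHk -[in RHS](cat_take_drop (T k) (take (T k.+1) s)).
by rewrite take_takel ?T_mono // /io_cost count_cat.
Qed.

Section ValidEvaluation.

Variables (n : nat) (e : rel 'I_n) (M : nat) (s : seq (op n)).
Hypothesis s_valid : valid_evaluation e M s.

Local Notation st0 := (State set0 set0 set0).

Definition state_at i := odflt st0 (exec e M st0 (take i s)).

Lemma exec_take i : exec e M st0 (take i s) = Some (state_at i).
Proof.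
rewrite /state_at; case E: exec => [st|] //.
by move: s_valid; rewrite /valid_evaluation run_exec -(cat_take_drop i s) exec_cat E.
Qed.

Lemma exec_between a c : a <= c ->
  exec e M (state_at a) (drop a (take c s)) = Some (state_at c).
Proof.
move=> ac; have split_c : take c s = take a s ++ drop a (take c s).
  by rewrite -{1}(cat_take_drop a (take c s)) take_takel.
by move: (exec_take c); rewrite {1}split_c exec_cat exec_take.
Qed.

Lemma wf_state_at i : wf_state e M (state_at i).
Proof.
apply: exec_wf (exec_take i) _.
by split=> [|||u|u v _]; rewrite ?cards0 ?sub0set ?inE.
Qed.

Lemma computed_state_at_mono :
  {homo (fun i => computed (state_at i)) : i j / i <= j >-> i \subset j}.
Proof. by move=> i j ij; rewrite (exec_computed (exec_between ij)) subsetUl. Qed.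

Lemma card_computed_state_at_succ i :
  #|computed (state_at i.+1)| <= #|computed (state_at i)|.+1.
Proof.
rewrite (exec_computed (exec_between (leqnSn i))).
apply: leq_trans (leq_card_setU _ _).1 _; rewrite -[X in _ <= X]addn1 leq_add2l.
rewrite cardsE (leq_trans (card_size _)) // size_pmap (leq_trans (count_size _ _)) //.
by rewrite size_drop size_take; case: ltnP => h; lia.
Qed.

Lemma computed_state_at_size : computed (state_at (size s)) = setT.
Proof.
have := exec_take (size s); rewrite take_size => E.
by move: s_valid; rewrite /valid_evaluation run_exec E => /eqP.
Qed.

End ValidEvaluation.

Lemma valid_evaluation_blocks n (e : rel 'I_n) M (s : seq (op n)) k :
  valid_evaluation e M s -> 0 < k <= n ->
  exists B : 'I_k -> {set 'I_n},
    [/\ forall j j', j != j' -> [disjoint B j & B j'],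
        forall j, #|B j| = n %/ k &
        \sum_j (#|out_boundary e (B j)| + #|in_boundary e (B j)|)
          <= 2 * k * M + io_cost s].
Proof.
move=> s_valid /andP[k_gt0 k_le_n]; set q := n %/ k.
pose g i := #|computed (state_at e M s i)|.
pose T j := first_reach g (size s) (j * q).
pose A j := computed (state_at e M s (T j)).
have T0 : T 0 = 0 by [].
have gT j : j <= k -> g (T j) = j * q.
  move=> jk; apply: first_reachE.
  - by rewrite /g /state_at take0 /= cards0.
  - exact: card_computed_state_at_succ s_valid.
  rewrite /g computed_state_at_size // cardsT card_ord.
  by rewrite (leq_trans (leq_mul jk (leqnn q))) // mulnC leq_divM.
have T_mono : {homo T : i j / i <= j}.
  by move=> i j ij; apply: first_reach_mono; rewrite leq_mul2r ij orbT.
have A_mono : {homo A : i j / i <= j >-> i \subset j}.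
  by move=> i j ij; apply: (computed_state_at_mono s_valid); apply: T_mono.
exists (fun j : 'I_k => A j.+1 :\: A j); split.
- by move=> j j' jj'; apply: disjoint_chain_diff.
- move=> j; rewrite cardsD (setIidPr (A_mono _ _ (leqnSn j))).
  by rewrite -/(g (T j.+1)) -/(g (T j)) !gT ?(ltnW (ltn_ord j)) // mulSn addnK.
have seg_le (j : 'I_k) :
    #|out_boundary e (A j.+1 :\: A j)| + #|in_boundary e (A j.+1 :\: A j)|
      <= 2 * M + io_cost (drop (T j) (take (T j.+1) s)).
  exact: exec_boundary_le (wf_state_at s_valid _) (exec_between s_valid (T_mono _ _ _)).
apply: (@leq_trans (\sum_(j < k) (2 * M + io_cost (drop (T j) (take (T j.+1) s))))).
  by apply: leq_sum => j _; apply: seg_le.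
rewrite big_split /= sum_nat_const card_ord (io_cost_segments s k T0 T_mono).
rewrite mulnCA mulnA leq_add2l -[in X in _ <= X](cat_take_drop (T k) s).
by rewrite /io_cost count_cat leq_addr.
Qed.

Local Open Scope ring_scope.

Lemma sum_sorted_prefix_le (R : realDomainType) (I : finType) (d c : I -> R)
    (lam : seq R) k :
  perm_eq [seq d i | i <- enum I] lam -> sorted <=%R lam -> (k <= size lam)%N ->
  (forall i, 0 <= c i <= 1) -> \sum_i c i = k%:R ->
  \sum_(i < k) lam`_i <= \sum_i d i * c i.
Proof.
(* With t the k-th smallest value, (d i - t) * c i >= min (d i - t) 0, and these
   minima add up to the k smallest values shifted by t. *)
move=> pe so kn c01 csum; set t := lam`_k.-1.
have lam_le i : (i < k)%N -> lam`_i <= t.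
  by move=> ik; apply: (sorted_leq_nth le_trans lexx) => //;
    rewrite ?inE /= -?subn1; lia.
have lam_ge i : (k <= i < size lam)%N -> t <= lam`_i.
  by move=> /andP[ki isz]; apply: (sorted_leq_nth le_trans lexx) => //;
    rewrite ?inE /= -?subn1; lia.
have shift : \sum_i d i * c i = \sum_i (d i - t) * c i + t * k%:R.
  by rewrite -csum mulr_sumr -big_split; apply: eq_bigr => i _ /=; ring.
have min_le : \sum_i Num.min (d i - t) 0 <= \sum_i (d i - t) * c i.
  apply: ler_sum => i _; have /andP[c0 c1] := c01 i.
  case: (leP 0 (d i - t)) => [dt|/ltW dt]; first exact: mulr_ge0.
  nra.
have min_sum : \sum_i Num.min (d i - t) 0 = \sum_(i < k) (lam`_i - t).
  have -> : \sum_i Num.min (d i - t) 0 = \sum_(x <- lam) Num.min (x - t) 0.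
    by rewrite -(perm_big _ pe) big_map big_enum.
  rewrite (big_nth 0) -(big_mkord xpredT (fun i => lam`_i - t)).
  rewrite (big_cat_nat (leq0n k) kn) /=.
  rewrite [X in _ + X]big_nat_cond [X in _ + X]big1 ?addr0; last first.
    by move=> i /andP[ki _]; apply/min_idPr; rewrite subr_ge0 lam_ge.
  rewrite big_nat_cond [RHS]big_nat_cond; apply: eq_bigr => i /andP[/andP[_ ik] _].
  by apply/min_idPl; rewrite subr_le0 lam_le.
move: min_le; rewrite min_sum sumrB sumr_const card_ord shift => le.
by rewrite -[X in X <= _](subrK (t *+ k)) mulr_natr lerD2r.
Qed.

Lemma char_poly_similar (R : comNzRingType) n (P P' D : 'M[R]_n) :
  P' *m P = 1%:M -> char_poly (P' *m D *m P) = char_poly D.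
Proof.
move=> P'P; have mapP'P : map_mx polyC P' *m map_mx polyC P = 1%:M.
  by rewrite -map_mxM P'P map_mx1.
rewrite /char_poly.
have -> : char_poly_mx (P' *m D *m P) = map_mx polyC P' *m char_poly_mx D *m map_mx polyC P.
  rewrite /char_poly_mx !map_mxM mulmxBr mulmxBl; congr (_ - _).
  by rewrite scalar_mxC -mulmxA mapP'P mulmx1.
by rewrite !det_mulmx mulrAC -det_mulmx mapP'P det1 mul1r.
Qed.

Section KyFan.

Variable R : rcfType.
Local Notation C := R[i].
Local Notation toC := (real_complex R).
Local Open Scope sesquilinear_scope.

Definition sqnorm (z : C) : R := complex.Re z ^+ 2 + complex.Im z ^+ 2.

Lemma sqnormE (z : C) : z * z^* = toC (sqnorm z).
Proof. by case: z => a b; rewrite /sqnorm /=; simpc; congr (Complex _ _); ring. Qed.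

Lemma sqnorm_ge0 z : 0 <= sqnorm z.
Proof. by rewrite addr_ge0 ?sqr_ge0. Qed.

Lemma conj_toC (x : R) : (toC x)^* = toC x.
Proof. by apply: conj_Creal; apply/complex_realP; exists x. Qed.

Lemma symmetric_spectral n (L : 'M[R]_n) (lam : seq R) :
  L^T = L -> char_poly L = \prod_(x <- lam) ('X - x%:P) ->
  exists (P : 'M[C]_n) (d : 'I_n -> R),
    [/\ P^t* *m P = 1%:M,
        map_mx toC L = P^t* *m diag_mx (\row_i toC (d i)) *m P &
        perm_eq [seq d i | i <- enum 'I_n] lam].
Proof.
move=> symL charL; set A := map_mx toC L.
have A_herm : A^t* = A.
  by apply/matrixP => i j; rewrite !mxE conj_toC -[in RHS]symL mxE.
have /orthomx_spectralP A_diag : A \is normalmx by apply/normalmxP; rewrite A_herm.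
set P := spectralmx A in A_diag; set dC := spectral_diag A in A_diag.
have P'P : P^t* *m P = 1%:M.
  by apply/mulmx1C/unitarymxP/spectral_unitarymx.
rewrite invmx_unitary ?spectral_unitarymx // in A_diag.
have dC_perm : perm_eq [seq dC 0 i | i <- enum 'I_n] [seq toC x | x <- lam].
  apply: prod_XsubC_eq; rewrite big_map big_enum /=.
  transitivity (char_poly A).
    rewrite A_diag char_poly_similar // char_poly_trig ?diag_mx_is_trig //.
    by apply: eq_bigr => i _; rewrite mxE eqxx mulr1n.
  rewrite -map_char_poly charL rmorph_prod big_map; apply: eq_bigr => x _.
  by rewrite rmorphB /= map_polyX map_polyC.
pose d i := complex.Re (dC 0 i).
have dCE i : dC 0 i = toC (d i).
  have : dC 0 i \in [seq toC x | x <- lam].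
    by rewrite -(perm_mem dC_perm) map_f ?mem_enum.
  by rewrite /d; case/mapP => x _ ->.
exists P, d; split=> //.
  by rewrite A_diag; congr (_ *m diag_mx _ *m _); apply/rowP => i; rewrite !mxE dCE.
have := perm_map (@complex.Re R) dC_perm.
by rewrite -!map_comp map_id_in.
Qed.

Section RowOrthonormal.

Variables (k n : nat) (Y : 'M[C]_(k, n)).
Hypothesis Y_orth : Y *m Y^t* = 1%:M.

Lemma sum_col_sqnorm : \sum_i \sum_j sqnorm (Y j i) = k%:R.
Proof.
rewrite exchange_big /= -[k in RHS]card_ord -sumr_const; apply: eq_bigr => j _.
have /matrixP/(_ j j) := Y_orth; rewrite !mxE eqxx mulr1n => Yjj.
apply: (@complexI R); rewrite rmorph1 -Yjj rmorph_sum.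
by apply: eq_bigr => i _; rewrite !mxE sqnormE.
Qed.

Lemma col_sqnorm_le1 i : \sum_j sqnorm (Y j i) <= 1.
Proof.
(* Q is a Hermitian idempotent, so c = Q i i = c ^+ 2 + \sum_(l != i) |Q i l| ^+ 2. *)
set c := \sum_j _; pose Q := Y^t* *m Y.
have QQ : Q *m Q = Q by rewrite mulmxA -(mulmxA _ Y) Y_orth mulmx1.
have Qii : Q i i = toC c.
  by rewrite rmorph_sum !mxE; apply: eq_bigr => j _; rewrite !mxE mulrC sqnormE.
have QJ l : Q l i = (Q i l)^*.
  by rewrite !mxE rmorph_sum; apply: eq_bigr => j _; rewrite !mxE rmorphM /= conjCK mulrC.
have : c = \sum_l sqnorm (Q i l).
  apply: (@complexI R); rewrite -Qii -{1}QQ rmorph_sum mxE.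
  by apply: eq_bigr => l _; rewrite QJ sqnormE.
rewrite (bigD1 i) //= Qii /sqnorm /= expr0n addr0 => c_eq.
have : 0 <= \sum_(l | l != i) sqnorm (Q i l) by apply: sumr_ge0 => l _; apply: sqnorm_ge0.
have : 0 <= c by apply: sumr_ge0 => j _; apply: sqnorm_ge0.
nra.
Qed.

End RowOrthonormal.

Theorem ky_fan n k (L : 'M[R]_n) (lam : seq R) (X : 'M[R]_(k, n)) :
  L^T = L -> char_poly L = \prod_(x <- lam) ('X - x%:P) -> sorted <=%R lam ->
  X *m X^T = 1%:M -> (k <= n)%N -> \sum_(i < k) lam`_i <= \tr (X *m L *m X^T).
Proof.
move=> symL charL sorted_lam X_orth kn.
have [P [d [P'P L_diag d_perm]]] := symmetric_spectral symL charL.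
have X_conj : (map_mx toC X)^t* = map_mx toC X^T.
  by apply/matrixP => i j; rewrite !mxE conj_toC.
pose Y := map_mx toC X *m P^t*.
have Y_orth : Y *m Y^t* = 1%:M.
  rewrite trmx_mul map_mxM trmxCK -mulmxA (mulmxA _ P) P'P mul1mx X_conj -map_mxM.
  by rewrite X_orth map_mx1.
have trE : \tr (X *m L *m X^T) = \sum_i d i * \sum_j sqnorm (Y j i).
  apply: (@complexI R); rewrite -trace_map_mx.
  transitivity (\tr (Y *m diag_mx (\row_i toC (d i)) *m Y^t*)).
    by rewrite !map_mxM L_diag -X_conj /Y trmx_mul map_mxM trmxCK !mulmxA.
  rewrite /mxtrace rmorph_sum; under [RHS]eq_bigr do rewrite mulr_sumr rmorph_sum.
  rewrite [RHS]exchange_big /=; apply: eq_bigr => j _; rewrite mxE.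
  apply: eq_bigr => i _; rewrite mul_mx_diag !mxE -mulrA [_ * _^*]mulrC mulrA.
  by rewrite sqnormE rmorphM /= mulrC.
have k_le_size : (k <= size lam)%N by rewrite -(perm_size d_perm) size_map size_enum_ord.
rewrite trE; apply: sum_sorted_prefix_le d_perm sorted_lam k_le_size _ _.
- move=> i; rewrite sumr_ge0 ?col_sqnorm_le1 // => j _; exact: sqnorm_ge0.
- exact: sum_col_sqnorm.
Qed.

End KyFan.

Section Cut.

Variables (R : realType) (n : nat) (e : rel 'I_n).

Definition cut_weight (A : {set 'I_n}) : R :=
  \sum_(u in A) \sum_(v in ~: A) wadj R e u v.

Definition out_weight (u v : 'I_n) : R := if e u v then (dout e u)%:R^-1 else 0.

Lemma wadjE u v : wadj R e u v = out_weight u v + out_weight v u.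
Proof. by []. Qed.

Lemma wadj_ge0 u v : 0 <= wadj R e u v.
Proof. by rewrite wadjE /out_weight addr_ge0 //; case: ifP; rewrite ?invr_ge0. Qed.

Lemma cut_weight_ge0 A : 0 <= cut_weight A.
Proof. by do 2![apply: sumr_ge0 => ? _]; apply: wadj_ge0. Qed.

Lemma sum_out_weight_le u (D : {set 'I_n}) :
  \sum_(v in D) out_weight u v <= ([exists v in D, e u v] : nat)%:R.
Proof.
rewrite /out_weight -big_mkcondr /=.
case: exists_inP => [[v vD euv]|noedge] /=; last first.
  by rewrite big_pred0 // => w; apply/negbTE/andP => -[wD euw]; apply: noedge; exists w.
have dout_gt0 : (0 < dout e u)%N by rewrite card_gt0; apply/set0Pn; exists v; rewrite inE.
rewrite sumr_const -[X in X <= _]mulr_natl ler_pdivrMr ?ltr0n // mul1r ler_nat.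
by apply/subset_leq_card/subsetP => w /andP[_ euw]; rewrite inE.
Qed.

Lemma cut_weight_le_boundary (A : {set 'I_n}) :
  cut_weight A <= (#|out_boundary e A| + #|in_boundary e A|)%:R.
Proof.
have card_sum (B : {set 'I_n}) (P : pred 'I_n) :
    #|[set u in B | P u]|%:R = \sum_(u in B) (P u : nat)%:R :> R.
  rewrite -sum1_card natr_sum big_mkcond [RHS]big_mkcond.
  by apply: eq_bigr => u _; rewrite !inE; case: (u \in B); case: (P u).
have -> : cut_weight A = \sum_(u in A) \sum_(v in ~: A) out_weight u v
                        + \sum_(v in ~: A) \sum_(u in A) out_weight v u.
  by rewrite [X in _ + X]exchange_big -big_split; apply: eq_bigr => u _; rewrite -big_split.
rewrite natrD !card_sum; apply: lerD; apply: ler_sum => u _; exact: sum_out_weight_le.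
Qed.

Lemma laplacian_block_sum (A : {set 'I_n}) :
  \sum_(u in A) \sum_(v in A) laplacian R e u v = cut_weight A.
Proof.
apply: eq_bigr => u uA; under eq_bigr do rewrite mxE.
have diag : \sum_(v in A) (u == v)%:R * \sum_w wadj R e u w = \sum_w wadj R e u w.
  rewrite (bigD1 u) //= eqxx mul1r [X in _ + X]big1 ?addr0 // => v /andP[_ /negPf].
  by rewrite eq_sym => ->; rewrite mul0r.
rewrite sumrB diag (bigID (mem A)) /= addrAC subrr add0r.
by apply: eq_bigl => v; rewrite inE.
Qed.

End Cut.

Section NormalizedIndicators.

Variables (R : rcfType) (n k : nat) (B : 'I_k -> {set 'I_n}).
Hypotheses (B_disj : forall j j', j != j' -> [disjoint B j & B j'])
  (B_gt0 : forall j, (0 < #|B j|)%N).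

Let scale j : R := (Num.sqrt #|B j|%:R)^-1.

Lemma scale_sqr j : scale j * scale j = #|B j|%:R^-1.
Proof. by rewrite -invfM -expr2 sqr_sqrtr ?ler0n. Qed.

Definition indicator_mx : 'M[R]_(k, n) :=
  \matrix_(j, u) (if u \in B j then scale j else 0).

Lemma indicator_mx_orthonormal : indicator_mx *m indicator_mx^T = 1%:M.
Proof.
apply/matrixP => j j'; rewrite !mxE; under eq_bigr do rewrite !mxE.
have [<-|jj'] := eqVneq j j'; last first.
  rewrite big1 // => u _; case: ifP => uBj; last by rewrite mul0r.
  by rewrite (disjointFr (B_disj jj') uBj) mulr0.
rewrite (eq_bigr (fun u => if u \in B j then scale j * scale j else 0)); last first.
  by move=> u _; case: ifP; rewrite ?mulr0.
rewrite -big_mkcond /= sumr_const scale_sqr -[LHS]mulr_natl mulfV //.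
by rewrite pnatr_eq0 -lt0n.
Qed.

Lemma indicator_mx_conj_diag (L : 'M[R]_n) j :
  (indicator_mx *m L *m indicator_mx^T) j j =
  #|B j|%:R^-1 * \sum_(u in B j) \sum_(v in B j) L u v.
Proof.
rewrite mxE; under eq_bigr => v _ do rewrite !mxE mulr_suml.
rewrite exchange_big /= mulr_sumr [RHS]big_mkcond; apply: eq_bigr => u _.
rewrite mxE; case: ifP => uB; last by rewrite big1 // => v _; rewrite mul0r mul0r.
rewrite mulr_sumr [RHS]big_mkcond; apply: eq_bigr => v _.
by case: ifP => vB; rewrite ?mulr0 // -scale_sqr; ring.
Qed.

End NormalizedIndicators.

Lemma laplacian_sym (R : realType) n (e : rel 'I_n) : (laplacian R e)^T = laplacian R e.
Proof.
apply/matrixP => u v; rewrite !mxE [wadj R e v u]addrC.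
by have [->//|_] := eqVneq u v; rewrite !mul0r.
Qed.

Lemma sum_eigenvalues_le_cut_weights (R : realType) n (e : rel 'I_n) (lam : seq R)
    k (B : 'I_k -> {set 'I_n}) q :
  sorted_eigenvalues (laplacian R e) lam -> (k <= n)%N ->
  (forall j j', j != j' -> [disjoint B j & B j']) -> (forall j, 0 < q <= #|B j|)%N ->
  q%:R * \sum_(i < k) lam`_i <= \sum_j cut_weight R e (B j).
Proof.
move=> [_ sorted_lam charL] kn B_disj B_size.
have B_gt0 j : (0 < #|B j|)%N by case/andP: (B_size j) => /leq_trans; apply.
have X_orth := indicator_mx_orthonormal R B_disj B_gt0.
have := ky_fan (laplacian_sym R e) charL sorted_lam X_orth kn.
have -> : \tr (indicator_mx R B *m laplacian R e *m (indicator_mx R B)^T) =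
          \sum_j #|B j|%:R^-1 * cut_weight R e (B j).
  by apply: eq_bigr => j _; rewrite indicator_mx_conj_diag laplacian_block_sum.
move/(ler_wpM2l (ler0n _ q))/le_trans; apply; rewrite mulr_sumr; apply: ler_sum => j _.
rewrite mulrA -[X in _ <= X]mul1r ler_wpM2r ?cut_weight_ge0 // ler_pdivrMr ?ltr0n //.
by rewrite mul1r ler_nat; case/andP: (B_size j).
Qed.

Theorem theorem4p4 (R : realType) (n : nat) (e : rel 'I_n) (M : nat)
    (lam : seq R) (sched : seq (op n)) :
  acyclic_graph e ->
  sorted_eigenvalues (laplacian R e) lam ->
  valid_evaluation e M sched ->
  forall k : nat, (1 <= k <= n)%N ->
    ((n %/ k)%:R * (\sum_(i < k) lam`_i) - 2 * k%:R * M%:R <= (io_cost sched)%:R :> R).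
Proof.
(* Acyclicity is implied by the existence of a valid evaluation. *)
move=> _ eig valid k k_range; have /andP[k_gt0 k_le_n] := k_range.
have [B [B_disj B_card io_le]] := valid_evaluation_blocks valid k_range.
have q_gt0 : (0 < n %/ k)%N by rewrite divn_gt0.
have B_size j : (0 < n %/ k <= #|B j|)%N by rewrite B_card q_gt0 leqnn.
have spec := sum_eigenvalues_le_cut_weights eig k_le_n B_disj B_size.
have cut_le : \sum_j cut_weight R e (B j) <= (2 * k * M + io_cost sched)%:R.
  apply: le_trans (ler_sum _ (fun j _ => cut_weight_le_boundary R e (B j))) _.
  by rewrite -natr_sum ler_nat.
rewrite natrD !natrM in cut_le; lra.
Qed.
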